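(* Let $\Delta' \preceq \Delta$. If $\Delta' \rightsquigarrow_\pi \Theta'$ then $\Delta \rightsquigarrow_\pi \Theta$ for some $\Theta$ such that $\Theta' \preceq \Theta$.
   Context: lqCCS is a quantum process calculus with sum $P+Q$ and if-then-else $\mathrm{if}\ e\ \mathrm{then}\ P\ \mathrm{else}\ Q$. The refinement relation $P' \preceq P$ is the smallest reflexive relation that is preserved by all process constructors (parallel, sum, prefixes, restriction, if-then-else) and satisfies: $P' \preceq P + Q$ whenever $P' \preceq P$; $Q' \preceq P + Q$ whenever $Q' \preceq Q$; and $\mathrm{if}\ e\ \mathrm{then}\ P'\ \mathrm{else}\ Q' \preceq P + Q$ for any boolean expression $e$ whenever $P' \preceq P$ and $Q' \preceq Q$ (i.e. $P'$ is obtained from $P$ by replacing some sums $Q+Q'$ by $Q$, $Q'$ or a boolean conditional between them). Extended configurations $\langle\!\langle \rho, P, R \rangle\!\rangle$ (density operator, process, observer) are refined by refining the process and keeping $\rho$ and $R$; the deadlock configuration $\bot$ refines every configuration; refinement of distributions is defined by linearity. $\rightsquigarrow_\pi$ is the enhanced semantics: transitions indexed by $\pi = \diamond$ when only the process moves (standard probabilistic reduction) or $\pi \in \{\ell,r\}^*$ naming the parallel component of the observer that acts (observer applies a superoperator/measurement, receives a value output by the process, or sends a value to it), lifted to distributions so that all configurations in the support move with the same index, configurations with no $\pi$-move going to $\overline{\bot}$. *)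

From mathcomp Require Import all_boot all_algebra.
From mathcomp Require Import boolp.
From Stdlib Require List.
Set Implicit Arguments. Unset Strict Implicit. Unset Printing Implicit Defensive.
Import GRing.Theory Num.Theory.
Local Open Scope ring_scope.

(* A model of lqCCS.  Scalars: an algebraically closed numeric field C       *)
(* (e.g. the complex numbers).  The global quantum system has Hilbert space  *)
(* C^d; a quantum state is a d x d matrix (density operator).                *)
(* Channels and values are natural numbers.  Binders (input, measurement     *)
(* outcome) are represented by Rocq functions (HOAS): the continuation of an *)
(* input c?x.P is the map v |-> P[v/x]; boolean expressions of a closed     *)
(* conditional are thus booleans.                                            *)

Inductive side := SL | SR.

Inductive idx := Diamond | Obs of seq side.

Section LqCCS.
Variable C : numClosedFieldType.
Variable d : nat.

Definition mxadj (A : 'M[C]_d) : 'M[C]_d := (map_mx Num.conj A)^T.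

(* superoperators (Kraus families) and measurements, on the global space *)
Definition kraus := seq 'M[C]_d.

Inductive proc : Type :=
| Nil
| Tau of proc
| Out of nat & nat & proc
| In of nat & (nat -> proc)
| Sop of kraus & proc
| Meas of kraus & (nat -> proc)
| Par of proc & proc
| Sum of proc & proc
| Res of proc & nat
| Ite of bool & proc & proc.

Inductive pref : proc -> proc -> Prop :=
| pref_refl P : pref P P
| pref_tau P' P : pref P' P -> pref (Tau P') (Tau P)
| pref_out c v P' P : pref P' P -> pref (Out c v P') (Out c v P)
| pref_in c f' f : (forall v, pref (f' v) (f v)) -> pref (In c f') (In c f)
| pref_sop K P' P : pref P' P -> pref (Sop K P') (Sop K P)
| pref_meas M f' f : (forall i, pref (f' i) (f i)) -> pref (Meas M f') (Meas M f)
| pref_par P' P Q' Q : pref P' P -> pref Q' Q -> pref (Par P' Q') (Par P Q)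
| pref_sum P' P Q' Q : pref P' P -> pref Q' Q -> pref (Sum P' Q') (Sum P Q)
| pref_res c P' P : pref P' P -> pref (Res P' c) (Res P c)
| pref_ite e P' P Q' Q : pref P' P -> pref Q' Q -> pref (Ite e P' Q') (Ite e P Q)
| pref_suml P' P Q : pref P' P -> pref P' (Sum P Q)
| pref_sumr Q' P Q : pref Q' Q -> pref Q' (Sum P Q)
| pref_ite_sum e P' P Q' Q : pref P' P -> pref Q' Q -> pref (Ite e P' Q') (Sum P Q).

Inductive qop := QId | QSop of kraus | QMeas of kraus.

Inductive lbl := LInt of qop | LOut of nat & nat | LIn of nat & nat.

Definition lbl_chan (a : lbl) : option nat :=
  match a with LInt _ => None | LOut c _ => Some c | LIn c _ => Some c end.

(* Labelled transitions of processes; the continuation is indexed by the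
   measurement outcome (ignored for non-measuring moves). *)
Inductive ptrans : proc -> lbl -> (nat -> proc) -> Prop :=
| pt_tau P : ptrans (Tau P) (LInt QId) (fun _ => P)
| pt_sop K P : ptrans (Sop K P) (LInt (QSop K)) (fun _ => P)
| pt_meas M f : ptrans (Meas M f) (LInt (QMeas M)) f
| pt_out c v P : ptrans (Out c v P) (LOut c v) (fun _ => P)
| pt_in c f v : ptrans (In c f) (LIn c v) (fun _ => f v)
| pt_suml P Q a k : ptrans P a k -> ptrans (Sum P Q) a k
| pt_sumr P Q a k : ptrans Q a k -> ptrans (Sum P Q) a k
| pt_ite e P Q a k : ptrans (if e then P else Q) a k -> ptrans (Ite e P Q) a k
| pt_parl P Q a k : ptrans P a k -> ptrans (Par P Q) a (fun i => Par (k i) Q)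
| pt_parr P Q a k : ptrans Q a k -> ptrans (Par P Q) a (fun i => Par P (k i))
| pt_coml P Q c v kP kQ : ptrans P (LOut c v) kP -> ptrans Q (LIn c v) kQ ->
    ptrans (Par P Q) (LInt QId) (fun i => Par (kP i) (kQ i))
| pt_comr P Q c v kP kQ : ptrans P (LIn c v) kP -> ptrans Q (LOut c v) kQ ->
    ptrans (Par P Q) (LInt QId) (fun i => Par (kP i) (kQ i))
| pt_res P c a k : ptrans P a k -> lbl_chan a <> Some c ->
    ptrans (Res P c) a (fun i => Res (k i) c).

(* Moves of the observer component at position pi of the parallel tree. *)
Inductive otrans : proc -> seq side -> lbl -> (nat -> proc) -> Prop :=
| ot_leaf R a k : ptrans R a k -> (forall R1 R2, R <> Par R1 R2) ->
    otrans R [::] a k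
| ot_l R1 R2 pi a k : otrans R1 pi a k ->
    otrans (Par R1 R2) (SL :: pi) a (fun i => Par (k i) R2)
| ot_r R1 R2 pi a k : otrans R2 pi a k ->
    otrans (Par R1 R2) (SR :: pi) a (fun i => Par R1 (k i)).

Definition is_density (rho : 'M[C]_d) : Prop :=
  (exists A : 'M[C]_d, rho = A *m mxadj A) /\ \tr rho = 1.

Definition complete (K : kraus) : Prop :=
  \sum_(k <- K) mxadj k *m k = 1%:M.

Definition qvalid (q : qop) (rho : 'M[C]_d) : Prop :=
  match q with
  | QId => True
  | QSop K => complete K
  | QMeas M => complete M /\ is_density rho
  end.

Definition apply_kraus (K : kraus) (rho : 'M[C]_d) : 'M[C]_d :=
  \sum_(k <- K) k *m rho *m mxadj k.

Definition meas_prob (M : kraus) (rho : 'M[C]_d) (i : nat) : C :=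
  \tr (nth 0 M i *m rho *m mxadj (nth 0 M i)).

Definition meas_post (M : kraus) (rho : 'M[C]_d) (i : nat) : 'M[C]_d :=
  (meas_prob M rho i)^-1 *: (nth 0 M i *m rho *m mxadj (nth 0 M i)).

Definition qeff (q : qop) (rho : 'M[C]_d) : seq (C * 'M[C]_d * nat) :=
  match q with
  | QId => [:: (1, rho, 0%N)]
  | QSop K => [:: (1, apply_kraus K rho, 0%N)]
  | QMeas M => [seq (meas_prob M rho i, meas_post M rho i, i)
               | i <- iota 0 (size M) & meas_prob M rho i != 0]
  end.

(* Extended configurations << rho, P, R >> and the deadlock configuration. *)
Inductive xconf := Bot | XC of 'M[C]_d & proc & proc.

Definition cref (c' c : xconf) : Prop :=
  match c', c with
  | Bot, _ => True
  | XC rho' P' R', XC rho P R => rho' = rho /\ pref P' P /\ R' = R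
  | XC _ _ _, Bot => False
  end.

(* (finitely supported) distributions over extended configurations *)
Definition dist := xconf -> C.

Definition dist_of (L : seq (C * xconf)) : dist :=
  fun c => \sum_(x <- L) (if `[< x.2 = c >] then x.1 else 0).

Definition dirac (c : xconf) : dist := dist_of [:: (1, c)].

Definition qdist (q : qop) (rho : 'M[C]_d) (F : 'M[C]_d -> nat -> xconf) : dist :=
  dist_of [seq (x.1.1, F x.1.2 x.2) | x <- qeff q rho].

Inductive xstep : xconf -> idx -> dist -> Prop :=
| xs_proc rho P R q k : ptrans P (LInt q) k -> qvalid q rho ->
    xstep (XC rho P R) Diamond (qdist q rho (fun rho' i => XC rho' (k i) R))
| xs_obs_op rho P R pi q k : otrans R pi (LInt q) k -> qvalid q rho ->
    xstep (XC rho P R) (Obs pi) (qdist q rho (fun rho' i => XC rho' P (k i)))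
| xs_obs_recv rho P R pi c v kR kP :
    otrans R pi (LIn c v) kR -> ptrans P (LOut c v) kP ->
    xstep (XC rho P R) (Obs pi) (dirac (XC rho (kP 0%N) (kR 0%N)))
| xs_obs_send rho P R pi c v kR kP :
    otrans R pi (LOut c v) kR -> ptrans P (LIn c v) kP ->
    xstep (XC rho P R) (Obs pi) (dirac (XC rho (kP 0%N) (kR 0%N))).

Definition dstep (Delta : dist) (pi : idx) (Theta : dist) : Prop :=
  exists L : seq (C * xconf * dist),
    List.Forall (fun x => 0 < x.1.1 /\
       (xstep x.1.2 pi x.2 \/
        ((forall T, ~ xstep x.1.2 pi T) /\ x.2 = dirac Bot))) L /\
    Delta = dist_of [seq x.1 | x <- L] /\
    Theta = (fun c => \sum_(x <- L) x.1.1 * x.2 c).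

Definition dref (Delta' Delta : dist) : Prop :=
  exists L : seq (C * xconf * xconf),
    List.Forall (fun x => 0 < x.1.1 /\ cref x.1.2 x.2) L /\
    Delta' = dist_of [seq (x.1.1, x.1.2) | x <- L] /\
    Delta = dist_of [seq (x.1.1, x.2) | x <- L].

End LqCCS.

(* Refinement only resolves sums, so every transition of a refined process is
   matched by a transition of the original one with the same label and
   pointwise refined continuations; hence every move of a configuration is
   matched by a move of each configuration it refines, to a refined
   distribution.  A configuration without a pi-move (in particular Bot) goes
   to the point mass at Bot, which refines the target of any move because
   targets are probability distributions.
   For distributions, Delta' is decomposed twice: as sum_e p_e c'_e by the
   refinement Delta' <= Delta and as sum_s q_s c'_s by the step.  Pairing e
   with s whenever c'_e = c'_s, with weight p_e q_s / Delta'(c'_e), gives a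
   coupling whose marginals are the two decompositions; each pair is then
   matched separately, and refinement is preserved by positive combinations. *)

From mathcomp Require Import all_boot all_order all_algebra boolp.
From mathcomp Require Import ring.
From Stdlib Require List.
Set Implicit Arguments. Unset Strict Implicit. Unset Printing Implicit Defensive.
Import Order.POrderTheory GRing.Theory Num.Theory.
Local Open Scope ring_scope.

Lemma In_allpairs_dep (S T R : Type) (f : S -> T -> R) (s : seq S) (t : S -> seq T) z :
  List.In z [seq f x y | x <- s, y <- t x] ->
  exists x, exists2 y, List.In x s /\ List.In y (t x) & z = f x y.
Proof.
case/List.in_concat => _ [/List.in_map_iff [x [<- sx]] /List.in_map_iff [y [<- ty]]].
by exists x, y.
Qed.

Lemma eq_big_In (R : Type) (idx : R) (op : R -> R -> R) (I : Type) (r : seq I)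
    (F G : I -> R) :
  (forall i, List.In i r -> F i = G i) ->
  \big[op/idx]_(i <- r) F i = \big[op/idx]_(i <- r) G i.
Proof.
elim: r => [|i r IHr] eqFG; first by rewrite !big_nil.
rewrite !big_cons eqFG; last by left.
by rewrite IHr // => j rj; apply: eqFG; right.
Qed.

Section SumIn.
Variables (R : numDomainType) (I : Type) (P : pred I) (F : I -> R).

Lemma sumr_ge0_In (r : seq I) :
  (forall j, List.In j r -> 0 <= F j) -> 0 <= \sum_(j <- r | P j) F j.
Proof.
elim: r => [|j r IHr] F_ge0; first by rewrite big_nil.
have sum_ge0 := IHr (fun k rk => F_ge0 k (or_intror rk)).
by rewrite big_cons; case: (P j) => //; rewrite addr_ge0 ?F_ge0 //; left.
Qed.

Lemma ler_sum_In (r : seq I) i :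
  (forall j, List.In j r -> 0 <= F j) -> List.In i r -> P i ->
  F i <= \sum_(j <- r | P j) F j.
Proof.
elim: r => [|j r IHr] //= F_ge0 ri Pi; rewrite big_cons.
have F_ge0r k : List.In k r -> 0 <= F k by move=> rk; apply: F_ge0; right.
case: ri => [-> | ri]; first by rewrite Pi lerDl sumr_ge0_In.
apply: le_trans (IHr F_ge0r ri Pi) _.
by case: (P j); rewrite ?lerDr ?F_ge0 //; left.
Qed.

End SumIn.

Section Distributions.
Variables (C : numClosedFieldType) (d : nat).
Local Notation xconf := (xconf C d).
Local Notation dist := (dist C d).

Definition dmix (I : Type) (s : seq I) (w : I -> C) (T : I -> dist) : dist :=
  fun c => \sum_(i <- s) w i * T i c.

Lemma dmix_cons (I : Type) (i : I) (s : seq I) (w : I -> C) (T : I -> dist) :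
  dmix (i :: s) w T = fun c => w i * T i c + dmix s w T c.
Proof. by apply/funext => c; rewrite /dmix big_cons. Qed.

Lemma dist_ofE (L : seq (C * xconf)) c :
  dist_of L c = \sum_(x <- L | `[< x.2 = c >]) x.1.
Proof. by rewrite /dist_of [RHS]big_mkcond. Qed.

Lemma dist_of_const (I : Type) (s : seq I) (w : I -> C) (c : xconf) :
  dist_of [seq (w i, c) | i <- s] = dist_of [:: (\sum_(i <- s) w i, c)].
Proof.
apply/funext => c'; rewrite /dist_of big_map big_seq1 /=.
by case: (asboolP (c = c')) => // _; rewrite big1.
Qed.

Lemma dist_of_mapE (I : Type) (s : seq I) (w : I -> C) (f : I -> xconf) c :
  dist_of [seq (w i, f i) | i <- s] c = \sum_(i <- s) w i * `[< f i = c >]%:R.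
Proof. by rewrite /dist_of big_map; apply: eq_bigr => i _; rewrite mulr_natr mulrb. Qed.

Lemma dref_dist_of_map (I : Type) (s : seq I) (w : I -> C) (f' f : I -> xconf) :
  (forall i, List.In i s -> 0 < w i /\ cref (f' i) (f i)) ->
  dref (dist_of [seq (w i, f' i) | i <- s]) (dist_of [seq (w i, f i) | i <- s]).
Proof.
move=> wf; exists [seq (w i, f' i, f i) | i <- s]; split; last by rewrite -!map_comp.
exact/List.Forall_map/List.Forall_forall.
Qed.

Lemma dref_dirac_Bot (I : Type) (s : seq I) (w : I -> C) (f : I -> xconf) :
  (forall i, List.In i s -> 0 < w i) -> \sum_(i <- s) w i = 1 ->
  dref (dirac (@Bot C d)) (dist_of [seq (w i, f i) | i <- s]).
Proof.
move=> w_gt0 w_sum1; rewrite /dirac -w_sum1 -(dist_of_const s w).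
by apply: dref_dist_of_map => i si; split; first exact: w_gt0.
Qed.

Lemma dref_add_scale (w : C) (T' T D' D : dist) : 0 < w -> dref T' T -> dref D' D ->
  dref (fun c => w * T' c + D' c) (fun c => w * T c + D c).
Proof.
move=> w_gt0 [L [/List.Forall_forall L_ok [-> ->]]] [K [/List.Forall_forall K_ok [-> ->]]].
exists ([seq (w * x.1.1, x.1.2, x.2) | x <- L] ++ K); split.
  apply/List.Forall_forall => x /List.in_app_iff [/List.in_map_iff [y [<- Ly]] | Kx].
    by have [y_gt0 y_ref] := L_ok y Ly; rewrite /= mulr_gt0.
  exact: K_ok.
by split; apply/funext => c; rewrite /dist_of !map_cat big_cat !big_map mulr_sumr;
  congr (_ + _); apply: eq_bigr => x _ /=; case: ifP; rewrite ?mulr0.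
Qed.

Lemma dref_dmix (I : Type) (s : seq I) (w : I -> C) (T' T : I -> dist) :
  (forall i, List.In i s -> 0 < w i /\ dref (T' i) (T i)) ->
  dref (dmix s w T') (dmix s w T).
Proof.
elim: s => [|i s IHs] ok.
  by exists [::]; split=> //; split; apply/funext => c; rewrite /dmix /dist_of !big_nil.
have [wi_gt0 Ti_ref] := ok i (or_introl erefl).
by rewrite !dmix_cons; apply: dref_add_scale => //; apply: IHs => j sj; apply: ok; right.
Qed.

End Distributions.

Section Coupling.
Variables (C : numClosedFieldType) (d : nat) (A B : Type).
Local Notation xconf := (xconf C d).
Variables (D : dist C d) (LA : seq (C * xconf * A)) (LB : seq (C * xconf * B)).
Hypothesis LA_gt0 : forall a, List.In a LA -> 0 < a.1.1.
Hypothesis LB_gt0 : forall b, List.In b LB -> 0 < b.1.1.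
Hypothesis DA : forall c, D c = \sum_(a <- LA | `[< a.1.2 = c >]) a.1.1.
Hypothesis DB : forall c, D c = \sum_(b <- LB | `[< b.1.2 = c >]) b.1.1.

Definition coupling_weight (a : C * xconf * A) (b : C * xconf * B) : C :=
  a.1.1 * b.1.1 / D a.1.2.

Lemma coupling_mass_gt0l a : List.In a LA -> 0 < D a.1.2.
Proof.
move=> LAa; rewrite DA; apply: lt_le_trans (LA_gt0 LAa) _.
by apply: (ler_sum_In (F := fun a => a.1.1) _ LAa (asboolT erefl)) => a' /LA_gt0/ltW.
Qed.

Lemma coupling_mass_gt0r b : List.In b LB -> 0 < D b.1.2.
Proof.
move=> LBb; rewrite DB; apply: lt_le_trans (LB_gt0 LBb) _.
by apply: (ler_sum_In (F := fun b => b.1.1) _ LBb (asboolT erefl)) => b' /LB_gt0/ltW.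
Qed.

Lemma coupling_weight_gt0 a b :
  List.In a LA -> List.In b LB -> 0 < coupling_weight a b.
Proof. by move=> LAa LBb; rewrite divr_gt0 ?mulr_gt0 ?LA_gt0 ?LB_gt0 ?coupling_mass_gt0l. Qed.

Lemma coupling_suml (f : C * xconf * A -> C) :
  \sum_(a <- LA) \sum_(b <- LB | `[< b.1.2 = a.1.2 >]) coupling_weight a b * f a =
  \sum_(a <- LA) a.1.1 * f a.
Proof.
apply: eq_big_In => a LAa.
rewrite (eq_bigr (fun b => a.1.1 * f a / D a.1.2 * b.1.1)) => [|b _]; last first.
  by rewrite /coupling_weight; ring.
by rewrite -mulr_sumr -DB divfK // gt_eqF // coupling_mass_gt0l.
Qed.

Lemma coupling_sumr (g : C * xconf * B -> C) :
  \sum_(a <- LA) \sum_(b <- LB | `[< b.1.2 = a.1.2 >]) coupling_weight a b * g b =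
  \sum_(b <- LB) b.1.1 * g b.
Proof.
under eq_bigr do rewrite big_mkcond; rewrite exchange_big /=.
apply: eq_big_In => b LBb.
rewrite (eq_bigr (fun a => b.1.1 * g b / D b.1.2 *
                           (if `[< a.1.2 = b.1.2 >] then a.1.1 else 0))) => [|a _].
  by rewrite -mulr_sumr -big_mkcond -DA divfK // gt_eqF // coupling_mass_gt0r.
case: (asboolP (a.1.2 = b.1.2)) => [eab | nab].
  by rewrite asboolT // /coupling_weight eab; ring.
by rewrite asboolF ?mulr0 // => eba; apply: nab.
Qed.

End Coupling.

Section Lifting.
Variables (C : numClosedFieldType) (d : nat).
Local Notation xconf := (xconf C d).
Local Notation dist := (dist C d).

Definition lift_step (S : xconf -> dist -> Prop) (Delta Theta : dist) : Prop :=
  exists L : seq (C * xconf * dist),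
    List.Forall (fun x => 0 < x.1.1 /\ S x.1.2 x.2) L /\
    Delta = dist_of [seq x.1 | x <- L] /\
    Theta = dmix L (fun x => x.1.1) (fun x => x.2).

Lemma lift_step_dmix (S : xconf -> dist -> Prop) (I : Type) (s : seq I)
    (w : I -> C) (c : I -> xconf) (T' : I -> dist) :
  (forall i, List.In i s -> 0 < w i /\ exists2 T, S (c i) T & dref (T' i) T) ->
  exists Theta, lift_step S (dist_of [seq (w i, c i) | i <- s]) Theta /\
                dref (dmix s w T') Theta.
Proof.
move=> sim.
have [T ST] : {T : I -> dist & forall i, List.In i s -> S (c i) (T i) /\ dref (T' i) (T i)}.
  apply: (choice (P := fun i T => List.In i s -> S (c i) T /\ dref (T' i) T)) => i.
  case: (pselect (List.In i s)) => [si | not_si]; last by exists (T' i).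
  by have [_ [T ? ?]] := sim i si; exists T.
exists (dmix s w T); split.
  exists [seq (w i, c i, T i) | i <- s]; split; last split.
  - apply/List.Forall_map/List.Forall_forall => i si.
    by split; [apply: (sim i si).1 | apply: (ST i si).1].
  - by rewrite -map_comp.
  - by apply/funext => x; rewrite /dmix big_map.
by apply: dref_dmix => i si; split; [apply: (sim i si).1 | apply: (ST i si).2].
Qed.

Lemma lift_step_sim (S' S : xconf -> dist -> Prop) (Delta' Delta Theta' : dist) :
  (forall c' c T', cref c' c -> S' c' T' -> exists2 T, S c T & dref T' T) ->
  dref Delta' Delta -> lift_step S' Delta' Theta' ->
  exists Theta, lift_step S Delta Theta /\ dref Theta' Theta.
Proof.
move=> sim [LR [/List.Forall_forall LR_ok [D'R ->]]] [LS [/List.Forall_forall LS_ok [D'S ->]]].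
have DA c : Delta' c = \sum_(a <- LR | `[< a.1.2 = c >]) a.1.1.
  by rewrite D'R dist_ofE big_map.
have DB c : Delta' c = \sum_(b <- LS | `[< b.1.2 = c >]) b.1.1.
  by rewrite D'S dist_ofE big_map.
have LR_gt0 a : List.In a LR -> 0 < a.1.1 by move=> /LR_ok[].
have LS_gt0 b : List.In b LS -> 0 < b.1.1 by move=> /LS_ok[].
have [|Theta [lift_Theta ref_Theta]] := lift_step_dmix (S := S)
    (s := [seq (a, b) | a <- LR, b <- [seq b <- LS | `[< b.1.2 = a.1.2 >]]])
    (w := fun ab => coupling_weight Delta' ab.1 ab.2) (c := fun ab => ab.1.2)
    (T' := fun ab => ab.2.2).
  move=> _ /(@In_allpairs_dep _ _ _ pair) [a [b [LRa /List.filter_In [LSb /asboolP eba]] ->]].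
  split; first exact: (coupling_weight_gt0 LR_gt0 LS_gt0 DA).
  by apply: sim (LR_ok a LRa).2 _; rewrite -eba; apply: (LS_ok b LSb).2.
exists Theta; split.
  congr (lift_step S _ Theta): lift_Theta; apply/funext => x.
  rewrite !dist_of_mapE big_allpairs_dep; under eq_bigr do rewrite big_filter.
  by rewrite /= (coupling_suml LR_gt0 DA DB).
congr (dref _ Theta): ref_Theta; apply/funext => x.
rewrite /dmix big_allpairs_dep; under eq_bigr do rewrite big_filter.
by rewrite (coupling_sumr LS_gt0 DA DB).
Qed.

End Lifting.

Section Processes.
Variables (C : numClosedFieldType) (d : nat).
Local Notation proc := (proc C d).

Definition psim (P' P : proc) : Prop :=
  forall a k', ptrans P' a k' -> exists2 k, ptrans P a k & forall i, pref (k' i) (k i).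

Lemma psim_par (P' P Q' Q : proc) : pref P' P -> pref Q' Q ->
  psim P' P -> psim Q' Q -> psim (Par P' Q') (Par P Q).
Proof.
move=> PP QQ simP simQ a k'.
move E: (Par P' Q') => R tr; case: R a k' / tr E => //
    [P1 Q1 a k' tr [eP eQ] | P1 Q1 a k' tr [eP eQ]
    | P1 Q1 c v kP' kQ' trP trQ [eP eQ] | P1 Q1 c v kP' kQ' trP trQ [eP eQ]];
    subst P1 Q1.
- have [k tr_k kk] := simP _ _ tr; exists (fun i => Par (k i) Q); first exact: pt_parl.
  by move=> i; apply: pref_par.
- have [k tr_k kk] := simQ _ _ tr; exists (fun i => Par P (k i)); first exact: pt_parr.
  by move=> i; apply: pref_par.
- have [kP trP' kkP] := simP _ _ trP; have [kQ trQ' kkQ] := simQ _ _ trQ.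
  exists (fun i => Par (kP i) (kQ i)); first exact: pt_coml trP' trQ'.
  by move=> i; apply: pref_par.
- have [kP trP' kkP] := simP _ _ trP; have [kQ trQ' kkQ] := simQ _ _ trQ.
  exists (fun i => Par (kP i) (kQ i)); first exact: pt_comr trP' trQ'.
  by move=> i; apply: pref_par.
Qed.

Lemma pref_psim (P' P : proc) : pref P' P -> psim P' P.
Proof.
elim=> {P' P} [P | P' P PP _ | c v P' P PP _ | c f' f ff _ | K P' P PP _ | M f' f ff _
             | P' P Q' Q PP simP QQ simQ | P' P Q' Q _ simP _ simQ | c P' P _ simP
             | e P' P Q' Q _ simP _ simQ | P' P Q _ simP | Q' P Q _ simQ
             | e P' P Q' Q _ simP _ simQ] a k'.
- by exists k' => // i; apply: pref_refl.
- move E: (Tau P') => R tr; case: R a k' / tr E => // _ [<-].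
  by exists (fun=> P) => //; apply: pt_tau.
- move E: (Out c v P') => R tr; case: R a k' / tr E => // _ _ _ [<- <- <-].
  by exists (fun=> P) => //; apply: pt_out.
- move E: (In c f') => R tr; case: R a k' / tr E => // _ _ u [<- <-].
  by exists (fun=> f u) => //; apply: pt_in.
- move E: (Sop K P') => R tr; case: R a k' / tr E => // _ _ [<- <-].
  by exists (fun=> P) => //; apply: pt_sop.
- move E: (Meas M f') => R tr; case: R a k' / tr E => // _ _ [<- <-].
  by exists f => //; apply: pt_meas.
- exact: psim_par.
- move E: (Sum P' Q') => R tr; case: R a k' / tr E => //
    [P1 Q1 a k' tr [eP eQ] | P1 Q1 a k' tr [eP eQ]]; subst P1 Q1.
  + by have [k tr_k kk] := simP _ _ tr; exists k => //; apply: pt_suml.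
  + by have [k tr_k kk] := simQ _ _ tr; exists k => //; apply: pt_sumr.
- move E: (Res P' c) => R tr; case: R a k' / tr E => // P1 c1 a k' tr nc [eP ec].
  subst P1 c1; have [k tr_k kk] := simP _ _ tr.
  by exists (fun i => Res (k i) c); [apply: pt_res | move=> i; apply: pref_res].
- move E: (Ite e P' Q') => R tr; case: R a k' / tr E => // e1 P1 Q1 a k' + [ee eP eQ].
  subst e1 P1 Q1; by case: e => [/simP | /simQ] [k tr_k kk]; exists k => //; apply: pt_ite.
- by case/simP=> k tr_k kk; exists k => //; apply: pt_suml.
- by case/simQ=> k tr_k kk; exists k => //; apply: pt_sumr.
- move E: (Ite e P' Q') => R tr; case: R a k' / tr E => // e1 P1 Q1 a k' + [ee eP eQ].
  subst e1 P1 Q1; case: e => [/simP | /simQ] [k tr_k kk]; exists k => //.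
  + exact: pt_suml.
  + exact: pt_sumr.
Qed.

End Processes.

Section Outcomes.
Variables (C : numClosedFieldType) (d : nat).

Lemma mxadjM (A B : 'M[C]_d) : mxadj (A *m B) = mxadj B *m mxadj A.
Proof. by rewrite /mxadj map_mxM trmx_mul. Qed.

Lemma mxtrace_mul_adj_ge0 (A : 'M[C]_d) : 0 <= \tr (A *m mxadj A).
Proof.
apply: sumr_ge0 => i _; rewrite mxE; apply: sumr_ge0 => j _.
by rewrite !mxE mul_conjC_ge0.
Qed.

Lemma meas_prob_ge0 (M : kraus C d) rho i : is_density rho -> 0 <= meas_prob M rho i.
Proof.
case=> [[A ->] _]; rewrite /meas_prob !mulmxA -mulmxA -mxadjM.
exact: mxtrace_mul_adj_ge0.
Qed.

Lemma qeff_weight_gt0 (q : qop C d) rho x :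
  qvalid q rho -> List.In x (qeff q rho) -> 0 < x.1.1.
Proof.
case: q => [|K|M] /= q_ok; try by case=> // <-.
case/List.in_map_iff=> i [<- /List.filter_In [_ /= pi_neq0]].
by rewrite lt0r pi_neq0 meas_prob_ge0 //; case: q_ok.
Qed.

Lemma qeff_weight_sum1 (q : qop C d) rho :
  qvalid q rho -> \sum_(x <- qeff q rho) x.1.1 = 1.
Proof.
case: q => [|K|M] /= q_ok; try by rewrite big_seq1.
case: q_ok => M_complete [_ tr_rho].
rewrite big_map big_filter big_mkcond /=.
rewrite (eq_bigr (meas_prob M rho)) => [|i _]; last by case: eqP => // ->.
rewrite -[size M]subn0 -/(index_iota 0 (size M)).
rewrite -(big_nth 0 predT (fun k => \tr (k *m rho *m mxadj k))) /=.
under eq_bigr => k _ do rewrite mxtrace_mulC mulmxA.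
by rewrite -linear_sum -mulmx_suml M_complete mul1mx.
Qed.

End Outcomes.

Section Configurations.
Variables (C : numClosedFieldType) (d : nat).
Local Notation xconf := (xconf C d).
Local Notation dist := (dist C d).

Lemma dref_qdist (q : qop C d) rho (F' F : 'M[C]_d -> nat -> xconf) :
  qvalid q rho -> (forall rho' i, cref (F' rho' i) (F rho' i)) ->
  dref (qdist q rho F') (qdist q rho F).
Proof.
move=> q_ok FF; apply: dref_dist_of_map => x qx.
by split; [apply: qeff_weight_gt0 qx | apply: FF].
Qed.

Lemma dref_dirac (c' c : xconf) : cref c' c -> dref (dirac c') (dirac c).
Proof.
move=> cc; apply: (dref_dist_of_map (s := [:: tt]) (w := fun=> 1)
                                    (f' := fun=> c') (f := fun=> c)).
by move=> _ _; rewrite ltr01.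
Qed.

Lemma xstep_sim (c' c : xconf) pi (T' : dist) : cref c' c -> xstep c' pi T' ->
  exists2 T, xstep c pi T & dref T' T.
Proof.
move=> cc st; case: st cc => {c' pi T'}
    [rho P' R q k' tr q_ok | rho P' R pi q k tr q_ok
    | rho P' R pi ch v kR kP' trR trP' | rho P' R pi ch v kR kP' trR trP'];
  case: c => // _ P _ [<- [PP <-]].
- have [k tr_k kk] := pref_psim PP tr.
  exists (qdist q rho (fun rho' i => XC rho' (k i) R)); first exact: xs_proc.
  exact: dref_qdist.
- exists (qdist q rho (fun rho' i => XC rho' P (k i))); first exact: xs_obs_op.
  exact: dref_qdist.
- have [kP trP kk] := pref_psim PP trP'.
  exists (dirac (XC rho (kP 0%N) (kR 0%N))); first exact: xs_obs_recv trR trP.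
  exact: dref_dirac.
- have [kP trP kk] := pref_psim PP trP'.
  exists (dirac (XC rho (kP 0%N) (kR 0%N))); first exact: xs_obs_send trR trP.
  exact: dref_dirac.
Qed.

Lemma xstep_dref_dirac_Bot (c : xconf) pi (T : dist) :
  xstep c pi T -> dref (dirac (@Bot C d)) T.
Proof.
case=> {c pi T} [? ? ? q ? _ q_ok | ? ? ? ? q ? _ q_ok | * | *]; try exact: dref_dirac.
all: apply: dref_dirac_Bot; last exact: qeff_weight_sum1.
all: by move=> x; apply: qeff_weight_gt0.
Qed.

(* [dstep Delta pi] unfolds to [lift_step (xstep_or_deadlock pi) Delta]. *)
Definition xstep_or_deadlock (pi : idx) (c : xconf) (T : dist) : Prop :=
  xstep c pi T \/ ((forall T0, ~ xstep c pi T0) /\ T = dirac (@Bot C d)).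

Lemma xstep_or_deadlock_sim pi (c' c : xconf) (T' : dist) :
  cref c' c -> xstep_or_deadlock pi c' T' ->
  exists2 T, xstep_or_deadlock pi c T & dref T' T.
Proof.
move=> cc [st | [_ ->]].
  by have [T st_T TT] := xstep_sim cc st; exists T => //; left.
case: (pselect (exists T, xstep c pi T)) => [[T st] | stuck].
  by exists T; [left | apply: xstep_dref_dirac_Bot st].
exists (dirac (@Bot C d)); last exact: dref_dirac.
by right; split=> // T st; apply: stuck; exists T.
Qed.

End Configurations.

Theorem theorem4p12 (C : numClosedFieldType) (d : nat)
  (Delta' Delta : dist C d) (pi : idx) (Theta' : dist C d) :
  dref Delta' Delta -> dstep Delta' pi Theta' ->
  exists Theta : dist C d, dstep Delta pi Theta /\ dref Theta' Theta.
Proof. exact: (lift_step_sim (@xstep_or_deadlock_sim C d pi)). Qed.
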